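(* Every Temperley–Lieb diagram $x$ in $\mathcal{TL}_0(\Bbbk)$ can be written uniquely as $x=x_{\mathrm{cup}}\circ x_{\mathrm{cap}}$, where $x_{\mathrm{cup}}$ is a cup diagram and $x_{\mathrm{cap}}$ is a cap diagram.
   Context: $\Bbbk$ is a field. $\mathcal{TL}_0(\Bbbk)$ is the strict $\Bbbk$-linear monoidal category with objects $\mathbf 0,\mathbf 1,\dots$, $\mathbf m\otimes\mathbf n=\mathbf{m+n}$, whose morphisms are generated under composition, tensor product and linear combination by $\mathrm{cup}:\mathbf 0\to\mathbf 2$ and $\mathrm{cap}:\mathbf 2\to\mathbf 0$ subject to $(\mathrm{id}_{\mathbf 1}\otimes\mathrm{cap})\circ(\mathrm{cup}\otimes\mathrm{id}_{\mathbf 1})=0=(\mathrm{cap}\otimes\mathrm{id}_{\mathbf 1})\circ(\mathrm{id}_{\mathbf 1}\otimes\mathrm{cup})$ and $\mathrm{cap}\circ\mathrm{cup}=\mathrm{id}_{\mathbf 0}$. A Temperley–Lieb diagram is a nonzero morphism obtainable from $\mathrm{cup}$, $\mathrm{cap}$ and identity morphisms using only $\otimes$ and $\circ$; a cup diagram (resp. cap diagram) is a nonzero morphism obtainable in this way from $\mathrm{cup}$ (resp. $\mathrm{cap}$) and identity morphisms only. *)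

(* A syntactic presentation of TL_0(k): the free k-linear
   strict monoidal category on cup : 0 -> 2, cap : 2 -> 0 modulo the
   relations of the paper. Morphisms m -> n are well-typed terms modulo teq. *)
From mathcomp Require Import all_boot all_algebra.
Set Implicit Arguments. Unset Strict Implicit. Unset Printing Implicit Defensive.
Import GRing.Theory.
Local Open Scope ring_scope.

Section TL.
Variable K : fieldType.

Inductive term : Type :=
| Zero of nat & nat
| Id of nat
| Cup
| Cap
| Comp of term & term
| Tens of term & term
| Add of term & term
| Scale of K & term.

Fixpoint src (t : term) : nat :=
  match t with
  | Zero m _ => m | Id n => n | Cup => 0 | Cap => 2
  | Comp _ g => src g | Tens f g => src f + src g
  | Add f _ => src f | Scale _ f => src f
  end%N.

Fixpoint tgt (t : term) : nat :=
  match t with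
  | Zero _ n => n | Id n => n | Cup => 2 | Cap => 0
  | Comp f _ => tgt f | Tens f g => tgt f + tgt g
  | Add f _ => tgt f | Scale _ f => tgt f
  end%N.

Fixpoint wt (t : term) : Prop :=
  match t with
  | Zero _ _ | Id _ | Cup | Cap => True
  | Comp f g => [/\ wt f, wt g & tgt g = src f]
  | Tens f g => wt f /\ wt g
  | Add f g => [/\ wt f, wt g, src f = src g & tgt f = tgt g]
  | Scale _ f => wt f
  end.

Inductive teq : term -> term -> Prop :=
| teq_refl f : wt f -> teq f f
| teq_sym f g : teq f g -> teq g f
| teq_trans f g h : teq f g -> teq g h -> teq f h
| teq_comp f f' g g' : teq f f' -> teq g g' -> tgt g = src f ->
    teq (Comp f g) (Comp f' g')
| teq_tens f f' g g' : teq f f' -> teq g g' -> teq (Tens f g) (Tens f' g')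
| teq_add f f' g g' : teq f f' -> teq g g' -> src f = src g -> tgt f = tgt g ->
    teq (Add f g) (Add f' g')
| teq_scale a f f' : teq f f' -> teq (Scale a f) (Scale a f')
| teq_addA f g h : wt (Add f (Add g h)) ->
    teq (Add f (Add g h)) (Add (Add f g) h)
| teq_addC f g : wt (Add f g) -> teq (Add f g) (Add g f)
| teq_add0 f : wt f -> teq (Add f (Zero (src f) (tgt f))) f
| teq_addN f : wt f -> teq (Add f (Scale (-1) f)) (Zero (src f) (tgt f))
| teq_scale1 f : wt f -> teq (Scale 1 f) f
| teq_scaleA a b f : wt f -> teq (Scale a (Scale b f)) (Scale (a * b) f)
| teq_scaleDl a b f : wt f ->
    teq (Scale (a + b) f) (Add (Scale a f) (Scale b f))
| teq_scaleDr a f g : wt (Add f g) ->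
    teq (Scale a (Add f g)) (Add (Scale a f) (Scale a g))
| teq_compA f g h : wt (Comp f (Comp g h)) ->
    teq (Comp (Comp f g) h) (Comp f (Comp g h))
| teq_comp1l f : wt f -> teq (Comp (Id (tgt f)) f) f
| teq_comp1r f : wt f -> teq (Comp f (Id (src f))) f
| teq_compDl f f' g : wt (Comp (Add f f') g) ->
    teq (Comp (Add f f') g) (Add (Comp f g) (Comp f' g))
| teq_compDr f g g' : wt (Comp f (Add g g')) ->
    teq (Comp f (Add g g')) (Add (Comp f g) (Comp f g'))
| teq_compZl a f g : wt (Comp f g) ->
    teq (Comp (Scale a f) g) (Scale a (Comp f g))
| teq_compZr a f g : wt (Comp f g) ->
    teq (Comp f (Scale a g)) (Scale a (Comp f g))
| teq_comp0l k n g : wt g -> tgt g = k ->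
    teq (Comp (Zero k n) g) (Zero (src g) n)
| teq_comp0r m k f : wt f -> src f = k ->
    teq (Comp f (Zero m k)) (Zero m (tgt f))
| teq_tensA f g h : wt f -> wt g -> wt h ->
    teq (Tens (Tens f g) h) (Tens f (Tens g h))
| teq_tens1l f : wt f -> teq (Tens (Id 0) f) f
| teq_tens1r f : wt f -> teq (Tens f (Id 0)) f
| teq_tens_id m n : teq (Tens (Id m) (Id n)) (Id (m + n))
| teq_interchange f g f' g' : wt (Comp f f') -> wt (Comp g g') ->
    teq (Comp (Tens f g) (Tens f' g')) (Tens (Comp f f') (Comp g g'))
| teq_tensDl f f' g : wt (Add f f') -> wt g ->
    teq (Tens (Add f f') g) (Add (Tens f g) (Tens f' g))
| teq_tensDr f g g' : wt f -> wt (Add g g') ->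
    teq (Tens f (Add g g')) (Add (Tens f g) (Tens f g'))
| teq_tensZl a f g : wt f -> wt g ->
    teq (Tens (Scale a f) g) (Scale a (Tens f g))
| teq_tensZr a f g : wt f -> wt g ->
    teq (Tens f (Scale a g)) (Scale a (Tens f g))
| teq_tens0l m n g : wt g ->
    teq (Tens (Zero m n) g) (Zero (m + src g) (n + tgt g))
| teq_tens0r m n f : wt f ->
    teq (Tens f (Zero m n)) (Zero (src f + m) (tgt f + n))
| teq_zig : teq (Comp (Tens (Id 1) Cap) (Tens Cup (Id 1))) (Zero 1 1)
| teq_zag : teq (Comp (Tens Cap (Id 1)) (Tens (Id 1) Cup)) (Zero 1 1)
| teq_loop : teq (Comp Cap Cup) (Id 0).

Inductive built (cupOK capOK : bool) : term -> Prop :=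
| built_id n : built cupOK capOK (Id n)
| built_cup : cupOK -> built cupOK capOK Cup
| built_cap : capOK -> built cupOK capOK Cap
| built_comp f g : built cupOK capOK f -> built cupOK capOK g ->
    tgt g = src f -> built cupOK capOK (Comp f g)
| built_tens f g : built cupOK capOK f -> built cupOK capOK g ->
    built cupOK capOK (Tens f g).

Definition nonzero (t : term) : Prop := ~ teq t (Zero (src t) (tgt t)).

Definition TL_diagram (t : term) : Prop := built true true t /\ nonzero t.
Definition cup_diagram (t : term) : Prop := built true false t /\ nonzero t.
Definition cap_diagram (t : term) : Prop := built false true t /\ nonzero t.

End TL.

From Pilot Require Import Defs.
From mathcomp Require Import all_boot all_algebra zify.
Set Implicit Arguments. Unset Strict Implicit. Unset Printing Implicit Defensive.
Import GRing.Theory.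

(** Existence: by the interchange law a diagram built from cups and caps is a composite
    of generators [Id i ⊗ cup ⊗ Id r] and [Id i ⊗ cap ⊗ Id r].  A cap directly above a cup
    is killed by a zig-zag relation, cancelled by the loop relation, or, when the two act
    on disjoint strands, commuted below it; pushing every cap down leaves either zero or a
    word of cups on top of a word of caps.

    Uniqueness: by far commutativity, cup words and cap words can be sorted by position.
    In the representation on words in a, b, c where cup inserts ab and cap removes it, a
    sorted cup-cap composite is a 0/1 matrix from which the number of through strands and
    all insertion positions can be read off, so two composites equal in TL_0 coincide. *)

Section TemperleyLiebZero.
Variable K : fieldType.
Local Notation term := (term K).
Local Notation Id := (@Id K).
Local Notation Cup := (@Cup K).
Local Notation Cap := (@Cap K).
Local Notation Zero := (@Zero K).

Lemma teq_wt (f g : term) :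
  teq f g -> [/\ wt f, wt g, src f = src g & tgt f = tgt g].
Proof.
elim=> {f g}; intros; simpl in *;
  repeat match goal with
  | H : _ /\ _ |- _ => destruct H
  | H : and3 _ _ _ |- _ => destruct H
  | H : and4 _ _ _ _ |- _ => destruct H
  end; repeat split; simpl; (assumption || lia).
Qed.

Lemma teq_wtl (f g : term) : teq f g -> wt f. Proof. by case/teq_wt. Qed.
Lemma teq_wtr (f g : term) : teq f g -> wt g. Proof. by case/teq_wt. Qed.
Lemma teq_src (f g : term) : teq f g -> src f = src g. Proof. by case/teq_wt. Qed.
Lemma teq_tgt (f g : term) : teq f g -> tgt f = tgt g. Proof. by case/teq_wt. Qed.

Lemma teq_compl (f f' g : term) :
  teq f f' -> wt g -> tgt g = src f -> teq (Comp f g) (Comp f' g).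
Proof. by move=> ff' wg e; apply: teq_comp => //; apply: teq_refl. Qed.

Lemma teq_compr (f g g' : term) :
  wt f -> teq g g' -> tgt g = src f -> teq (Comp f g) (Comp f g').
Proof. by move=> wf gg' e; apply: teq_comp => //; apply: teq_refl. Qed.

Lemma teq_tensl (f f' g : term) : teq f f' -> wt g -> teq (Tens f g) (Tens f' g).
Proof. by move=> ff' wg; apply: teq_tens => //; apply: teq_refl. Qed.

Lemma teq_tensr (f g g' : term) : wt f -> teq g g' -> teq (Tens f g) (Tens f g').
Proof. by move=> wf gg'; apply: teq_tens => //; apply: teq_refl. Qed.

Lemma teq_compAl (f g h : term) : wt f -> wt g -> wt h ->
  tgt g = src f -> tgt h = src g -> teq (Comp f (Comp g h)) (Comp (Comp f g) h).
Proof. by move=> *; apply/teq_sym/teq_compA. Qed.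

Lemma teq_comp1l_at n (f : term) : wt f -> tgt f = n -> teq (Comp (Id n) f) f.
Proof. by move=> wf <-; apply: teq_comp1l. Qed.

Lemma teq_comp1r_at n (f : term) : wt f -> src f = n -> teq (Comp f (Id n)) f.
Proof. by move=> wf <-; apply: teq_comp1r. Qed.

Definition is_zero (t : term) := teq t (Zero (src t) (tgt t)).

Lemma is_zeroP (t : term) m n : teq t (Zero m n) -> is_zero t.
Proof. by move=> t0; rewrite /is_zero (teq_src t0) (teq_tgt t0). Qed.

Lemma is_zero_teq (s t : term) : teq s t -> is_zero t -> is_zero s.
Proof. by move=> st t0; apply: is_zeroP; apply: teq_trans st t0. Qed.

Lemma is_zero_compl (f g : term) : is_zero f -> wt g -> tgt g = src f -> is_zero (Comp f g).
Proof.
move=> f0 wg e; apply: is_zeroP; apply: teq_trans (teq_compl f0 wg e) _.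
exact: teq_comp0l.
Qed.

Lemma is_zero_compr (f g : term) : wt f -> is_zero g -> tgt g = src f -> is_zero (Comp f g).
Proof.
move=> wf g0 e; apply: is_zeroP; apply: teq_trans (teq_compr wf g0 e) _.
exact: teq_comp0r.
Qed.

Definition whisk i (G : term) r := Tens (Id i) (Tens G (Id r)).

Lemma wt_whisk i (G : term) r : wt G -> wt (whisk i G r).
Proof. by []. Qed.

Lemma tensI_comp q (A B : term) : wt A -> wt B -> tgt B = src A ->
  teq (Comp (Tens (Id q) A) (Tens (Id q) B)) (Tens (Id q) (Comp A B)).
Proof.
move=> wA wB e; apply: teq_trans (teq_interchange _ _) _ => //.
by apply: teq_tensl ((teq_comp1l (f := Id q) I)) _; split.
Qed.

Lemma tens_compI r (A B : term) : wt A -> wt B -> tgt B = src A ->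
  teq (Comp (Tens A (Id r)) (Tens B (Id r))) (Tens (Comp A B) (Id r)).
Proof.
move=> wA wB e; apply: teq_trans (teq_interchange _ _) _ => //.
by apply: teq_tensr ((teq_comp1l (f := Id r) I)); split.
Qed.

Lemma whisk_comp i (F G : term) r : wt F -> wt G -> tgt G = src F ->
  teq (Comp (whisk i F r) (whisk i G r)) (whisk i (Comp F G) r).
Proof.
move=> wF wG e; apply: teq_trans (tensI_comp _ _ _ _) _ => //=; first by rewrite e.
exact: teq_tensr (tens_compI _ _ _ _).
Qed.

Lemma whisk_teq i (F G : term) r : teq F G -> teq (whisk i F r) (whisk i G r).
Proof. by move=> FG; apply: teq_tensr => //; apply: teq_tensl. Qed.

Lemma whisk_id i k r : teq (whisk i (Id k) r) (Id (i + (k + r))).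
Proof.
apply: teq_trans (teq_tens_id _ _ _).
exact: teq_tensr (teq_tens_id _ _ _).
Qed.

Lemma whisk0 (G : term) : wt G -> teq (whisk 0 G 0) G.
Proof. by move=> wG; apply: teq_trans (teq_tens1l _) (teq_tens1r _). Qed.

Lemma whisk_zero i a b r :
  teq (whisk i (Zero a b) r) (Zero (i + (a + r)) (i + (b + r))).
Proof.
apply: teq_trans (teq_tens0r _ _ (f := Id i) I).
exact: teq_tensr (teq_tens0l _ _ (g := Id r) I).
Qed.

Lemma whisk_tensIr i (A : term) k r : wt A ->
  teq (whisk i (Tens A (Id k)) r) (whisk i A (k + r)).
Proof.
move=> wA; apply: teq_tensr => //; apply: teq_trans (teq_tensA _ _ _) _ => //.
exact: teq_tensr (teq_tens_id _ _ _).
Qed.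

Lemma whisk_tensIl i (A : term) k r : wt A ->
  teq (whisk i (Tens (Id k) A) r) (whisk (i + k) A r).
Proof.
move=> wA; apply: teq_trans (teq_tensr _ (teq_tensA _ _ _)) _ => //.
apply: teq_trans (teq_sym (teq_tensA _ _ _)) _ => //.
exact: teq_tensl (teq_tens_id _ _ _) _.
Qed.

Lemma tens_factor_lr (G Y : term) : wt G -> wt Y ->
  teq (Comp (Tens G (Id (tgt Y))) (Tens (Id (src G)) Y)) (Tens G Y).
Proof.
move=> wG wY; apply: teq_trans (teq_interchange _ _) _ => //.
by apply: teq_tens; [apply: teq_comp1r | apply: teq_comp1l].
Qed.

Lemma tens_factor_rl (G Y : term) : wt G -> wt Y ->
  teq (Comp (Tens (Id (tgt G)) Y) (Tens G (Id (src Y)))) (Tens G Y).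
Proof.
move=> wG wY; apply: teq_trans (teq_interchange _ _) _ => //.
by apply: teq_tens; [apply: teq_comp1l | apply: teq_comp1r].
Qed.

Lemma whisk_split q g d (H : term) r : wt H ->
  teq (whisk (q + g + d) H r)
      (Tens (Id q) (Tens (Id g) (Tens (Id d) (Tens H (Id r))))).
Proof.
move=> wH; rewrite /whisk.
apply: (@teq_trans _ _ (Tens (Tens (Tens (Id q) (Id g)) (Id d)) (Tens H (Id r)))).
  apply: teq_tensl => //; apply: teq_trans (teq_sym (teq_tens_id _ _ _)) _.
  exact: teq_tensl (teq_sym (teq_tens_id _ _ _)) _.
by apply: teq_trans (teq_tensA _ _ _) _ => //; apply: teq_tensA.
Qed.

(* Far commutativity: G and H act on disjoint blocks of strands. *)
Lemma whisk_comp_far q (G H : term) d r a b c e : wt G -> wt H ->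
  a = q + src G + d -> b = q + tgt G + d -> c = d + (tgt H + r) -> e = d + (src H + r) ->
  teq (Comp (whisk q G c) (whisk a H r)) (Comp (whisk b H r) (whisk q G e)).
Proof.
move=> wG wH -> -> -> ->.
have wY : wt (Tens (Id d) (Tens H (Id r))) by [].
apply: (@teq_trans _ _ (Tens (Id q) (Tens G (Tens (Id d) (Tens H (Id r)))))).
  apply: teq_trans (teq_compr (wt_whisk _ _ wG) (whisk_split _ _ _ _ wH) _) _.
    by rewrite /=; lia.
  apply: teq_trans (tensI_comp _ _ _ _) _ => //.
  exact: teq_tensr (tens_factor_lr wG wY).
apply: teq_sym; apply: teq_trans (teq_compl (whisk_split _ _ _ _ wH) (wt_whisk _ _ wG) _) _.
  by rewrite /=; lia.
apply: teq_trans (tensI_comp _ _ _ _) _ => //.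
exact: teq_tensr (tens_factor_rl wG wY).
Qed.

Lemma whisk_loop i r : teq (Comp (whisk i Cap r) (whisk i Cup r)) (Id (i + (0 + r))).
Proof.
apply: teq_trans (whisk_comp _ _ _ _ _) _ => //.
exact: teq_trans (whisk_teq _ _ (teq_loop K)) (whisk_id _ _ _).
Qed.

Lemma whisk_zag i r : is_zero (Comp (whisk i Cap (1 + r)) (whisk (i + 1) Cup r)).
Proof.
apply: is_zeroP; apply: teq_trans.
  apply: teq_comp (teq_sym (whisk_tensIr _ _ _ _)) (teq_sym (whisk_tensIl _ _ _ _)) _ => //.
  by rewrite /=; lia.
apply: teq_trans (whisk_comp _ _ _ _ _) _ => //.
exact: teq_trans (whisk_teq _ _ (teq_zag K)) (whisk_zero _ _ _ _).
Qed.

Lemma whisk_zig j r : is_zero (Comp (whisk (j + 1) Cap r) (whisk j Cup (1 + r))).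
Proof.
apply: is_zeroP; apply: teq_trans.
  apply: teq_comp (teq_sym (whisk_tensIl _ _ _ _)) (teq_sym (whisk_tensIr _ _ _ _)) _ => //.
  by rewrite /=; lia.
apply: teq_trans (whisk_comp _ _ _ _ _) _ => //.
exact: teq_trans (whisk_teq _ _ (teq_zig K)) (whisk_zero _ _ _ _).
Qed.

(** * Words of generators *)

Local Notation generator := (bool * nat * nat)%type.

Definition gen (g : generator) : term :=
  let: (c, i, r) := g in whisk i (if c then Cup else Cap) r.

Fixpoint word n (w : seq generator) : term :=
  if w is g :: w' then Comp (gen g) (word n w') else Id n.

Lemma wt_gen g : wt (gen g).
Proof. by case: g => [[[] i] r]. Qed.

Lemma src_word n w : wt (word n w) -> src (word n w) = n.
Proof. by elim: w => //= g w IH [_ /IH]. Qed.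

Lemma word_cat m n w1 w2 : wt (word m w1) -> wt (word n w2) -> tgt (word n w2) = m ->
  teq (word n (w1 ++ w2)) (Comp (word m w1) (word n w2)).
Proof.
move=> w1t w2t e; elim: w1 w1t => [_|g w1 IH [wg w1t e1]] /=.
  by rewrite -e; apply/teq_sym/teq_comp1l.
have IH1 := IH w1t.
apply: teq_trans (teq_compr wg IH1 _) _; first by rewrite (teq_tgt IH1).
by apply/teq_sym/teq_compA; split=> //; apply: teq_wtr IH1.
Qed.

Definition shiftr k (g : generator) := let: (c, i, r) := g in (c, i, r + k).
Definition shiftl k (g : generator) := let: (c, i, r) := g in (c, k + i, r).

Lemma gen_tensIr k g : teq (Tens (gen g) (Id k)) (gen (shiftr k g)).
Proof.
case: g => [[c i] r]; have wG : wt (if c then Cup else Cap) by case: c.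
apply: teq_trans (teq_tensA _ _ _) _ => //.
apply: teq_tensr => //; apply: teq_trans (teq_tensA _ _ _) _ => //.
exact: teq_tensr (teq_tens_id _ _ _).
Qed.

Lemma gen_tensIl k g : teq (Tens (Id k) (gen g)) (gen (shiftl k g)).
Proof.
case: g => [[c i] r]; have wG : wt (if c then Cup else Cap) by case: c.
apply: teq_trans (teq_sym (teq_tensA _ _ _)) _ => //.
exact: teq_tensl (teq_tens_id _ _ _) _.
Qed.

Lemma word_tensIr k n w : wt (word n w) ->
  teq (Tens (word n w) (Id k)) (word (n + k) (map (shiftr k) w)).
Proof.
elim: w => [_|g w IH [wg ww e]] /=; first exact: teq_tens_id.
apply: teq_trans (teq_tensr _ (teq_sym (teq_comp1l (f := Id k) I))) _ => //.
apply: teq_trans (teq_sym (teq_interchange _ _)) _ => //.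
by apply: teq_comp (gen_tensIr _ _) (IH ww) _; rewrite /= e.
Qed.

Lemma word_tensIl k n w : wt (word n w) ->
  teq (Tens (Id k) (word n w)) (word (k + n) (map (shiftl k) w)).
Proof.
elim: w => [_|g w IH [wg ww e]] /=; first exact: teq_tens_id.
apply: teq_trans (teq_tensl (teq_sym (teq_comp1l (f := Id k) I)) _) _ => //.
apply: teq_trans (teq_sym (teq_interchange _ _)) _ => //.
by apply: teq_comp (gen_tensIl _ _) (IH ww) _; rewrite /= e.
Qed.

Definition allowed (cupOK capOK : bool) (g : generator) := if g.1.1 then cupOK else capOK.

Lemma all_allowed_shiftr cupOK capOK k w :
  all (allowed cupOK capOK) (map (shiftr k) w) = all (allowed cupOK capOK) w.
Proof. by elim: w => //= [[[c i] r] w ->]. Qed.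

Lemma all_allowed_shiftl cupOK capOK k w :
  all (allowed cupOK capOK) (map (shiftl k) w) = all (allowed cupOK capOK) w.
Proof. by elim: w => //= [[[c i] r] w ->]. Qed.

Lemma built_word cupOK capOK x : built cupOK capOK x ->
  exists w, all (allowed cupOK capOK) w /\ teq x (word (src x) w).
Proof.
elim=> {x}.
- by move=> n; exists [::]; split=> //; apply: teq_refl.
- move=> ok; exists [:: (true, 0, 0)]; split; first by rewrite /= /allowed ok.
  exact/teq_sym/(teq_trans (teq_comp1r _) (whisk0 _)).
- move=> ok; exists [:: (false, 0, 0)]; split; first by rewrite /= /allowed ok.
  exact/teq_sym/(teq_trans (teq_comp1r _) (whisk0 _)).
- move=> f g _ [wf [af ff]] _ [wg [ag gg]] e.
  exists (wf ++ wg); split; first by rewrite all_cat af ag.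
  apply: teq_trans (teq_comp ff gg e) _.
  apply/teq_sym/word_cat; [exact: teq_wtr ff | exact: teq_wtr gg |].
  by rewrite -(teq_tgt gg).
- move=> f g _ [wf [af ff]] _ [wg [ag gg]].
  exists (map (shiftr (tgt g)) wf ++ map (shiftl (src f)) wg); split.
    by rewrite all_cat all_allowed_shiftr all_allowed_shiftl af ag.
  have Hf : teq (Tens f (Id (tgt g))) (word (src f + tgt g) (map (shiftr (tgt g)) wf)).
    exact: teq_trans (teq_tensl ff _) (word_tensIr _ (teq_wtr ff)).
  have Hg : teq (Tens (Id (src f)) g) (word (src f + src g) (map (shiftl (src f)) wg)).
    exact: teq_trans (teq_tensr _ gg) (word_tensIl _ (teq_wtr gg)).
  apply: teq_trans (teq_sym (tens_factor_lr (teq_wtl ff) (teq_wtl gg))) _.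
  apply: teq_trans (teq_comp Hf Hg _) _ => //.
  apply/teq_sym/word_cat; [exact: teq_wtr Hf | exact: teq_wtr Hg |].
  by rewrite -(teq_tgt Hg).
Qed.

Lemma word_built cupOK capOK n w :
  all (allowed cupOK capOK) w -> wt (word n w) -> built cupOK capOK (word n w).
Proof.
elim: w => [_ _|[[c i] r] w IH /andP [ok aw] [_ ww e]]; first exact: built_id.
apply: built_comp => //; last exact: IH.
apply: built_tens; first exact: built_id.
apply: built_tens; last exact: built_id.
by move: ok; rewrite /allowed /=; case: (c) => ok; [apply: built_cup | apply: built_cap].
Qed.

(** * Existence *)

Definition cup_word (w : seq generator) := all (fun g => g.1.1) w.
Definition cap_word (w : seq generator) := all (fun g => ~~ g.1.1) w.

Lemma cup_wordE w : all (allowed true false) w = cup_word w.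
Proof. by elim: w => //= [[[[] i] r] w ->]. Qed.

Lemma cap_wordE w : all (allowed false true) w = cap_word w.
Proof. by elim: w => //= [[[[] i] r] w ->]. Qed.

Definition cupcap_form k (X : term) := exists wc wa k',
  [/\ cup_word wc, cap_word wa, wt (Comp (word k' wc) (word k wa)) &
      teq X (Comp (word k' wc) (word k wa))].

Definition normalizable k (X : term) := is_zero X \/ cupcap_form k X.

Lemma normalizable_teq k (X Y : term) : teq X Y -> normalizable k Y -> normalizable k X.
Proof.
move=> XY [Y0|[wc [wa [k' [cw ca wUA YUA]]]]]; first by left; apply: is_zero_teq XY Y0.
by right; exists wc, wa, k'; split=> //; apply: teq_trans XY YUA.
Qed.

Lemma normalizable_cup k j s (Y : term) : wt (Comp (gen (true, j, s)) Y) ->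
  normalizable k Y -> normalizable k (Comp (gen (true, j, s)) Y).
Proof.
move=> [_ wY eY] [Y0|[wc [wa [k' [cw ca [wU wA eUA] YUA]]]]].
  by left; apply: is_zero_compr.
have eU : tgt (word k' wc) = src (gen (true, j, s)) by rewrite -eY (teq_tgt YUA).
right; exists ((true, j, s) :: wc), wa, k'; split=> //.
apply: teq_trans (teq_compr _ YUA eY) _ => //.
exact: teq_compAl.
Qed.

Lemma cap_cup_reduce i r j s : i + (2 + r) = j + (2 + s) ->
  [\/ is_zero (Comp (gen (false, i, r)) (gen (true, j, s))),
      teq (Comp (gen (false, i, r)) (gen (true, j, s))) (Id (i + (0 + r))) |
      exists j' s' i' r', teq (Comp (gen (false, i, r)) (gen (true, j, s)))
                              (Comp (gen (true, j', s')) (gen (false, i', r')))].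
Proof.
move=> e /=; case: (ltngtP i j) => [ij|ji|eij].
- have [ej|j_far] := eqVneq j (i + 1).
    rewrite ej (_ : r = 1 + s); last by lia.
    by apply: Or31; apply: whisk_zag.
  apply: Or33; exists (j - 2), s, i, (j - i - 2 + s).
  by apply: (whisk_comp_far (d := j - i - 2)) => //=; lia.
- have [ei|i_far] := eqVneq i (j + 1).
    rewrite ei (_ : s = 1 + r); last by lia.
    by apply: Or31; apply: whisk_zig.
  apply: Or33; exists j, (i - j - 2 + r), (i - 2), r.
  by apply/teq_sym/(whisk_comp_far (d := i - j - 2)) => //=; lia.
- rewrite -eij; have -> : s = r by lia.
  by apply: Or32; apply: whisk_loop.
Qed.

Lemma cap_gen_cup_word wc i r k : cup_word wc ->
  wt (Comp (gen (false, i, r)) (word k wc)) ->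
  normalizable k (Comp (gen (false, i, r)) (word k wc)).
Proof.
elim: wc i r => [|[[[] j] s] wc IH] i r //.
  move=> _ wX; right; exists [::], [:: (false, i, r)], (i + (0 + r)); split=> //.
  exact: teq_sym (teq_comp1l wX).
move=> cw /= [_ [_ ww eW] eC].
have XA := teq_compAl (wt_gen (false, i, r)) (wt_gen (true, j, s)) ww eC eW.
case: (cap_cup_reduce (esym eC)) => [X0|Xid|[j' [s' [i' [r' Xex]]]]].
- by left; apply: is_zero_teq XA (is_zero_compl X0 ww _).
- have eId : tgt (word k wc) = i + (0 + r) by rewrite eW; exact: teq_src Xid.
  right; exists wc, [::], k; split=> //; first by split=> //; rewrite src_word.
  apply: teq_trans XA (teq_trans (teq_compl Xid ww eW) _).
  apply: teq_trans (teq_comp1l_at ww eId) _.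
  exact: teq_sym (teq_comp1r_at ww (src_word ww)).
have [_ [wg wh eh] es _] := teq_wt Xex.
have eW' : tgt (word k wc) = src (gen (false, i', r')) by rewrite eW; exact: es.
apply: normalizable_teq (teq_trans XA (teq_compl Xex ww eW)) _.
apply: normalizable_teq (teq_compA _) _; first by split=> //; split.
apply: normalizable_cup; first by split=> //; split.
exact: IH.
Qed.

Lemma word_normalizable n w : wt (word n w) -> normalizable n (word n w).
Proof.
elim: w => [_|g w IH [wg ww e]].
  by right; exists [::], [::], n; split=> //; exact: teq_sym (teq_comp1l (f := Id n) I).
case: (IH ww) => [W0|[wc [wa [k' [cw ca [wU wA eUA] WUA]]]]].
  by left; apply: is_zero_compr.
have eU : tgt (word k' wc) = src (gen g) by rewrite -e (teq_tgt WUA).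
have XA : teq (word n (g :: w)) (Comp (Comp (gen g) (word k' wc)) (word n wa)).
  exact: teq_trans (teq_compr wg WUA e) (teq_compAl wg wU wA eU eUA).
case: g wg e eU XA => [[[] i] r] wg e eU XA.
  by right; exists ((true, i, r) :: wc), wa, k'; split.
have eA : tgt (word n wa) = k' by rewrite eUA src_word.
have [X0|[wc' [wa' [k'' [cw' ca' /= [wU' wA' eUA'] CUA]]]]] :=
  cap_gen_cup_word cw (And3 wg wU eU).
  by left; apply: is_zero_teq XA (is_zero_compl X0 wA _); rewrite /= src_word.
have cat := word_cat wA' wA eA.
right; exists wc', (wa' ++ wa), k''; split=> //.
- by rewrite /cap_word all_cat; apply/andP.
- by split=> //; [exact: teq_wtl cat | rewrite (teq_tgt cat)].
apply: teq_trans XA (teq_trans (teq_compl CUA wA eUA) _).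
have eA' : tgt (word n wa) = src (word k' wa') by rewrite eA src_word.
apply: teq_trans (teq_compA _) _; first by split=> //; split.
by apply: teq_compr => //; apply: teq_sym.
Qed.

Lemma TL_diagram_cup_cap (x : term) : TL_diagram x ->
  exists u v, [/\ cup_diagram u, cap_diagram v, src u = tgt v & teq x (Comp u v)].
Proof.
case=> bx nx; have [w [_ xw]] := built_word bx.
case: (word_normalizable (teq_wtr xw)) => [W0|[wc [wa [k' [cw ca [wU wA e] WUA]]]]].
  by case: nx; apply: is_zero_teq xw W0.
have xUA := teq_trans xw WUA.
exists (word k' wc), (word (src x) wa); split=> //.
- split; first by apply: word_built; rewrite ?cup_wordE.
  by move=> U0; apply: nx; apply: is_zero_teq xUA (is_zero_compl U0 wA e).
- split; first by apply: word_built; rewrite ?cap_wordE.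
  by move=> A0; apply: nx; apply: is_zero_teq xUA (is_zero_compr wU A0 e).
Qed.

(** * Uniqueness *)

Definition pos (g : generator) := g.1.2.
Definition gen_gt (g h : generator) := pos h < pos g.
Definition gen_lt (g h : generator) := pos g < pos h.

(* Insertion step of a sort by position; the last clause is the invariant that keeps
   the result sorted along the induction. *)
Lemma sort_cup_cons s q r0 k : cup_word s -> pairwise gen_gt s ->
  wt (Comp (gen (true, q, r0)) (word k s)) ->
  exists s', [/\ cup_word s', pairwise gen_gt s',
    teq (Comp (gen (true, q, r0)) (word k s)) (word k s') &
    forall b, q < b -> all (fun h => pos h + 2 < b) s -> all (fun h => pos h < b) s'].
Proof.
elim: s q r0 => [|[[c p] r] s1 IH] q r0.
  move=> _ _ wX; exists [:: (true, q, r0)]; split=> //; first exact: teq_refl.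
  by move=> b /= ->.
rewrite /cup_word /= => /andP [/= -> cs1] /andP [hall ps1] /= [_ [_ ws1 eR] e].
case: (ltnP p q) => pq.
  exists [:: (true, q, r0), (true, p, r) & s1]; split=> //.
  - apply/and3P; split=> //; apply/andP; split; first exact: pq.
    by apply: sub_all hall => h; rewrite /gen_gt /pos /=; lia.
  - by apply: teq_refl; split=> //; split.
  move=> b qb; rewrite /= /pos /= => /andP [pb s1b]; rewrite qb /=.
  by apply/andP; split; [lia | apply: sub_all s1b => h /=; lia].
have [d ed] : exists d, p = q + d by exists (p - q); lia.
subst p; have er0 : r0 = d + (2 + r) by lia.
subst r0.
have far : teq (Comp (whisk q Cup (d + (2 + r))) (whisk (q + d) Cup r))
               (Comp (whisk (q + 2 + d) Cup r) (whisk q Cup (d + (0 + r)))).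
  by apply: whisk_comp_far => //=; lia.
have wX : wt (Comp (gen (true, q, d + (0 + r))) (word k s1)).
  by split=> //=; rewrite eR /=; lia.
have [s1' [cs1' ps1' X1 bound]] := IH q (d + (0 + r)) cs1 ps1 wX.
exists ((true, q + 2 + d, r) :: s1'); split=> //.
- rewrite pairwise_cons ps1' andbT; apply: (bound (q + 2 + d)); first lia.
  by apply: sub_all hall => h; rewrite /gen_gt /pos /=; lia.
- apply: teq_trans; first by apply: teq_compAl => //=; rewrite ?eR /=; lia.
  apply: teq_trans; first by apply: (teq_compl far ws1); rewrite eR /=; lia.
  apply: teq_trans; first by apply: teq_sym; apply: teq_compAl => //=; rewrite ?eR /=; lia.
  by apply: teq_compr => //=; lia.
- move=> b qb; rewrite /= {1}/pos /= => /andP [pb s1b].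
  by apply/andP; split; [rewrite /pos /=; lia | exact: bound].
Qed.

Lemma sort_cap_cons t i r0 n : cap_word t -> pairwise gen_lt t ->
  wt (Comp (gen (false, i, r0)) (word n t)) ->
  exists t', [/\ cap_word t', pairwise gen_lt t',
    teq (Comp (gen (false, i, r0)) (word n t)) (word n t') &
    forall b, b < i -> all (fun h => b < pos h) t -> all (fun h => b < pos h) t'].
Proof.
elim: t i r0 => [|[[c j] r] t1 IH] i r0.
  move=> _ _ wX; exists [:: (false, i, r0)]; split=> //; first exact: teq_refl.
  by move=> b /= ->.
rewrite /cap_word /= => /andP [/negbTE -> ct1] /andP [hall pt1] /= [_ [_ wt1 eR] e].
case: (ltnP i j) => ij.
  exists [:: (false, i, r0), (false, j, r) & t1]; split=> //.
  - apply/and3P; split=> //; apply/andP; split; first exact: ij.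
    by apply: sub_all hall => h; rewrite /gen_lt /pos /=; lia.
  - by apply: teq_refl; split=> //; split.
  by move=> b bi /= /andP [bj t1b]; rewrite /pos /= bi bj.
have [d ed] : exists d, i = j + d by exists (i - j); lia.
subst i; have er : r = d + (2 + r0) by lia.
subst r.
have far : teq (Comp (whisk (j + d) Cap r0) (whisk j Cap (d + (2 + r0))))
               (Comp (whisk j Cap (d + (0 + r0))) (whisk (j + 2 + d) Cap r0)).
  by apply: teq_sym; apply: whisk_comp_far => //=; lia.
have wX : wt (Comp (gen (false, j + 2 + d, r0)) (word n t1)).
  by split=> //=; rewrite eR /=; lia.
have [t1' [ct1' pt1' X1 bound]] := IH (j + 2 + d) r0 ct1 pt1 wX.
exists ((false, j, d + (0 + r0)) :: t1'); split=> //.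
- rewrite pairwise_cons pt1' andbT; apply: (bound j); first lia.
  by apply: sub_all hall => h; rewrite /gen_lt /pos /=.
- apply: teq_trans; first by apply: teq_compAl => //=; rewrite ?eR /=; lia.
  apply: teq_trans; first by apply: (teq_compl far wt1); rewrite eR /=; lia.
  apply: teq_trans; first by apply: teq_sym; apply: teq_compAl => //=; rewrite ?eR /=; lia.
  by apply: teq_compr => //=; lia.
- move=> b bi; rewrite /= {1}/pos /= => /andP [bj t1b].
  by apply/andP; split; [rewrite /pos /=; lia | apply: bound => //; lia].
Qed.

Lemma sort_cup_word w k : cup_word w -> wt (word k w) ->
  exists s, [/\ cup_word s, pairwise gen_gt s & teq (word k w) (word k s)].
Proof.
elim: w => [|[[[] q] r] w IH] //; first by exists [::]; split=> //; apply: teq_refl.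
move=> /= cw [wg ww e]; have [s [cs ps ws]] := IH cw ww.
have X1 : teq (word k ((true, q, r) :: w)) (Comp (gen (true, q, r)) (word k s)).
  exact: teq_compr.
have [s' [cs' ps' X2 _]] := sort_cup_cons cs ps (teq_wtr X1).
by exists s'; split=> //; apply: teq_trans X1 X2.
Qed.

Lemma sort_cap_word w n : cap_word w -> wt (word n w) ->
  exists t, [/\ cap_word t, pairwise gen_lt t & teq (word n w) (word n t)].
Proof.
elim: w => [|[[[] q] r] w IH] //; first by exists [::]; split=> //; apply: teq_refl.
move=> /= cw [wg ww e]; have [t [ct pt wt_]] := IH cw ww.
have X1 : teq (word n ((false, q, r) :: w)) (Comp (gen (false, q, r)) (word n t)).
  exact: teq_compr.
have [t' [ct' pt' X2 _]] := sort_cap_cons ct pt (teq_wtr X1).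
by exists t'; split=> //; apply: teq_trans X1 X2.
Qed.

Definition la : 'I_3 := @Ordinal 3 0 isT.
Definition lb : 'I_3 := @Ordinal 3 1 isT.
Definition lc : 'I_3 := @Ordinal 3 2 isT.

Definition insert_ab i (z : seq 'I_3) := take i z ++ la :: lb :: drop i z.
Definition inserts_ab (P : seq nat) z := foldr insert_ab z P.

Fixpoint valid_pos (P : seq nat) k :=
  if P is i :: P' then (i <= k + 2 * size P') && valid_pos P' k else true.

Lemma size_insert_ab i z : size (insert_ab i z) = (size z).+2.
Proof. by rewrite /insert_ab size_cat /= !addnS -size_cat cat_take_drop. Qed.

Lemma size_inserts_ab P z : size (inserts_ab P z) = size z + 2 * size P.
Proof. by elim: P => [|i P IH] /=; rewrite ?addn0 // size_insert_ab IH; lia. Qed.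

Lemma count_insert_ab i z : count_mem lc (insert_ab i z) = count_mem lc z.
Proof.
by rewrite /insert_ab count_cat /= -[in RHS](cat_take_drop i z) count_cat !add0n.
Qed.

Lemma count_inserts_ab P z : count_mem lc (inserts_ab P z) = count_mem lc z.
Proof. by elim: P => //= i P IH; rewrite count_insert_ab IH. Qed.

Lemma insert_ab_inj i z1 z2 : size z1 = size z2 -> insert_ab i z1 = insert_ab i z2 -> z1 = z2.
Proof.
move=> sz /eqP; rewrite /insert_ab eqseq_cat; last by rewrite !size_take sz.
case/andP => /eqP e1; rewrite !eqseq_cons /= => /eqP e2.
by rewrite -(cat_take_drop i z1) e1 e2 cat_take_drop.
Qed.

Lemma inserts_ab_inj P z1 z2 : size z1 = size z2 -> inserts_ab P z1 = inserts_ab P z2 -> z1 = z2.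
Proof.
move=> sz; elim: P => //= i P IH e; apply: IH.
by apply: (insert_ab_inj _ e); rewrite !size_inserts_ab sz.
Qed.

Lemma nth_insert_ab i z : i <= size z -> nth lc (insert_ab i z) i = la.
Proof. by move=> iz; rewrite /insert_ab nth_cat size_takel // ltnn subnn. Qed.

Lemma nth_inserts_ab_neq_a P z j :
  all (fun l => l != la) z -> pairwise (fun a b => b < a) P -> valid_pos P (size z) ->
  all (fun p => p < j) P -> nth lc (inserts_ab P z) j != la.
Proof.
move=> za; elim: P j => [|i P IH] j /=.
  move=> _ _ _; case: (ltnP j (size z)) => jz; last by rewrite nth_default.
  by move/allP: za; apply; apply: mem_nth.
case/andP => Pi sP /andP [iz vP] /andP [ij Pj].
have iz' : i <= size (inserts_ab P z) by rewrite size_inserts_ab.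
rewrite /insert_ab nth_cat size_takel // ltnNge ltnW //=.
have [->|i2j] : j = i.+1 \/ i.+2 <= j by lia.
  by rewrite subSnn.
rewrite (_ : j - i = (j - i - 2).+2) /=; last by lia.
rewrite nth_drop (_ : i + (j - i - 2) = j - 2); last by lia.
by apply: IH => //; apply: sub_all Pi => p /=; lia.
Qed.

Lemma nth_inserts_ab_head i P z j : all (fun l => l != la) z ->
  pairwise (fun a b => b < a) (i :: P) -> valid_pos (i :: P) (size z) ->
  i < j -> nth lc (inserts_ab (i :: P) z) j != la.
Proof.
move=> za sP vP ij; apply: nth_inserts_ab_neq_a => //=.
by case/andP: sP => Pi _; rewrite ij; apply: sub_all Pi => p /=; lia.
Qed.

Lemma inserts_ab_pos_inj P P' z : all (fun l => l != la) z ->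
  pairwise (fun a b => b < a) P -> pairwise (fun a b => b < a) P' ->
  valid_pos P (size z) -> valid_pos P' (size z) -> inserts_ab P z = inserts_ab P' z ->
  P = P'.
Proof.
move=> za; elim: P P' => [|i P IH] [|i' P'] //.
- by move=> _ _ _ _ /(congr1 size); rewrite /= size_insert_ab size_inserts_ab; lia.
- by move=> _ _ _ _ /(congr1 size); rewrite /= size_insert_ab size_inserts_ab; lia.
move=> sP sP' vP vP' e.
have ii' : i = i'.
  case: (ltngtP i i') => // [ii'|i'i].
    have := nth_inserts_ab_head za sP vP ii'.
    by case/andP: vP' => iz _; rewrite e /= nth_insert_ab ?size_inserts_ab ?eqxx.
  have := nth_inserts_ab_head za sP' vP' i'i.
  by case/andP: vP => iz _; rewrite -e /= nth_insert_ab ?size_inserts_ab ?eqxx.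
subst i'; case/andP: sP sP' vP vP' => _ sP /andP [_ sP'] /andP [_ vP] /andP [_ vP'].
congr cons; apply: IH => //; apply: (insert_ab_inj _ e).
by move: (congr1 size e); rewrite !size_insert_ab => -[].
Qed.

Definition cup_ins s z := inserts_ab (map pos s) z.
Definition cap_ins t z := inserts_ab (rev (map pos t)) z.

Lemma cap_ins_cons g t z : cap_ins (g :: t) z = cap_ins t (insert_ab (pos g) z).
Proof. by rewrite /cap_ins /= rev_cons /inserts_ab foldr_rcons. Qed.

Lemma tgt_cup_word s k : cup_word s -> wt (word k s) -> tgt (word k s) = k + 2 * size s.
Proof.
elim: s => [|[[[] i] r] s IH] //=; first by rewrite addn0.
by move=> cs [_ ws e]; move: (IH cs ws); rewrite e; lia.
Qed.

Lemma valid_pos_cup s k : cup_word s -> wt (word k s) -> valid_pos (map pos s) k.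
Proof.
elim: s => [|[[[] i] r] s IH] //= cs [_ ws e].
rewrite IH // andbT size_map /pos /=.
by move: (tgt_cup_word cs ws); rewrite e; lia.
Qed.

Lemma valid_pos_rcons P i k : valid_pos (rcons P i) k = (i <= k) && valid_pos P (k + 2).
Proof.
elim: P k => [|j P IH] k /=; first by rewrite addn0 andbT.
rewrite IH size_rcons andbCA (_ : k + 2 * (size P).+1 = k + 2 + 2 * size P) //; lia.
Qed.

Lemma valid_pos_cap t n : cap_word t -> wt (word n t) ->
  valid_pos (rev (map pos t)) (tgt (word n t)).
Proof.
elim: t => [|[[[] i] r] t IH] //= ct [_ wt_ e].
rewrite rev_cons valid_pos_rcons /pos /=; apply/andP; split; first lia.
by move: (IH ct wt_); rewrite e /= (_ : i + (0 + r) + 2 = i + (2 + r)) //; lia.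
Qed.

Lemma pairwise_rev (T : Type) (r : rel T) s :
  pairwise r (rev s) = pairwise (fun x y => r y x) s.
Proof. by elim: s => //= x s IH; rewrite rev_cons pairwise_rcons IH all_rev. Qed.

Lemma cup_word_pos_inj s s' k : cup_word s -> cup_word s' ->
  wt (word k s) -> wt (word k s') -> map pos s = map pos s' -> s = s'.
Proof.
elim: s s' => [|[[[] i] r] s IH] [|[[[] i'] r'] s'] //= cs cs' [_ ws e] [_ ws' e'] [ii' ss'].
have := IH s' cs cs' ws ws' ss'; rewrite /pos /= in ii' => Es; subst s' i'.
by rewrite e' in e; rewrite (_ : r = r') //; lia.
Qed.

Lemma cap_word_pos_inj t t' n : cap_word t -> cap_word t' ->
  wt (word n t) -> wt (word n t') -> map pos t = map pos t' -> t = t'.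
Proof.
elim: t t' => [|[[[] i] r] t IH] [|[[[] i'] r'] t'] //= ct ct' [_ wt_ e] [_ wt' e'] [ii' tt'].
have := IH t' ct ct' wt_ wt' tt'; rewrite /pos /= in ii' => Et; subst t' i'.
by rewrite e' in e; rewrite (_ : r = r') //; lia.
Qed.

(** * The representation on words in a, b, c *)

Local Open Scope ring_scope.

Fixpoint words n : seq (seq 'I_3) :=
  if n is n'.+1 then [seq l :: w | l <- [:: la; lb; lc], w <- words n'] else [:: [::]].

Definition ind (b : bool) : K := if b then 1 else 0.

Lemma ind_and a b : ind (a && b) = ind a * ind b.
Proof. by case: a; case: b; rewrite /ind ?mulr1 ?mulr0 ?mul0r. Qed.

(* A representation separating diagrams: [sem t y x] is the coefficient of the output
   word y in the image of the input word x, over the letters a, b, c.  Cup creates ab and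
   cap only accepts ab; the zig-zag relations hold because ab does not overlap itself,
   and the letter c, never touched, marks the through strands. *)
Fixpoint sem (t : term) (y x : seq 'I_3) : K :=
  match t with
  | Defs.Zero _ _ => 0
  | Defs.Id n => ind ((y == x) && (size x == n)%N)
  | Defs.Cup => ind ((y == [:: la; lb]) && (x == [::]))
  | Defs.Cap => ind ((y == [::]) && (x == [:: la; lb]))
  | Comp f g => \sum_(w <- words (tgt g)) sem f y w * sem g w x
  | Tens f g =>
      sem f (take (tgt f) y) (take (src f) x) * sem g (drop (tgt f) y) (drop (src f) x)
  | Add f g => sem f y x + sem g y x
  | Scale a f => a * sem f y x
  end.

Lemma size_words n w : w \in words n -> size w = n.
Proof.
elim: n w => [|n IH] w; first by rewrite inE => /eqP ->.
by move=> /allpairsP [[l v] [_ /IH hv ->]] /=; rewrite hv.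
Qed.

Lemma sum_neq0 (I : eqType) (r : seq I) (F : I -> K) :
  \sum_(i <- r) F i != 0 -> exists2 i, i \in r & F i != 0.
Proof.
move=> F0; apply/hasP; apply: contraR F0 => /hasPn F0.
by apply/eqP; rewrite big_seq big1 // => i /F0; rewrite negbK => /eqP.
Qed.

Lemma sem_support (t : term) y x :
  wt t -> sem t y x != 0 -> size y = tgt t /\ size x = src t.
Proof.
elim: t y x => [m n|n|||f IHf g IHg|f IHf g IHg|f IHf g IHg|a f IHf] y x /=.
- by rewrite eqxx.
- move=> _; rewrite /ind; case: (y =P x) => [->|_] /=; last by rewrite eqxx.
  by case: (size x =P n) => [-> _|_] //=; rewrite eqxx.
- move=> _; rewrite /ind; case: (y =P _) => [->|_] /=; last by rewrite eqxx.
  by case: (x =P [::]) => [-> _|_] //=; rewrite eqxx.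
- move=> _; rewrite /ind; case: (y =P _) => [->|_] /=; last by rewrite eqxx.
  by case: (x =P _) => [-> _|_] //=; rewrite eqxx.
- case=> hf hg e /sum_neq0 [w _]; rewrite mulf_eq0 negb_or => /andP [h1 h2].
  by split; [case: (IHf _ _ hf h1) | case: (IHg _ _ hg h2)].
- case=> hf hg; rewrite mulf_eq0 negb_or => /andP [h1 h2].
  case: (IHf _ _ hf h1) => e1 e2; case: (IHg _ _ hg h2) => e3 e4.
  by rewrite -(cat_take_drop (tgt f) y) -(cat_take_drop (src f) x) !size_cat e1 e2 e3 e4.
- case=> hf hg e1 e2; have [->|h1 _] := eqVneq (sem f y x) 0; last exact: IHf.
  by rewrite add0r e1 e2; apply: IHg.
- move=> hf; rewrite mulf_eq0 negb_or => /andP [_ h]; exact: IHf.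
Qed.

Lemma sem_eq0 (t : term) y x :
  wt t -> (size y != tgt t) || (size x != src t) -> sem t y x = 0.
Proof.
move=> wt_ yx; apply/eqP; apply: contraTT yx => /(sem_support wt_) [-> ->].
by rewrite !eqxx.
Qed.

Lemma sum_letters_delta (G : 'I_3 -> K) l0 :
  \sum_(l <- [:: la; lb; lc]) ind (l == l0) * G l = G l0.
Proof.
rewrite !big_cons big_nil addr0.
case: l0 => [[|[|[|m]]] hm] //;
  rewrite /ind /= ?mul1r ?mul0r ?add0r ?addr0 /la /lb /lc; congr G; exact: val_inj.
Qed.

Lemma wordsS n :
  words n.+1 = allpairs_dep (fun l w => l :: w) [:: la; lb; lc] (fun _ => words n).
Proof. by []. Qed.

Lemma sum_words_delta n (F : seq 'I_3 -> K) z :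
  \sum_(w <- words n) ind (w == z) * F w = ind (size z == n) * F z.
Proof.
elim: n F z => [|n IH] F z.
  by rewrite /= big_seq1; case: z => [|l z]; rewrite /ind /= ?mul0r.
rewrite wordsS big_allpairs_dep; case: z => [|l0 z].
  rewrite big1 /ind /= ?mul0r // => l _; rewrite big1 // => w _.
  by rewrite mul0r.
rewrite (eq_bigr (fun l => ind (l == l0) * (ind (size z == n) * F (l :: z)))).
  by rewrite (sum_letters_delta (fun l => ind (size z == n) * F (l :: z))).
move=> l _; rewrite -(IH (fun w => F (l :: w))) big_distrr /=.
by apply: eq_bigr => w _; rewrite eqseq_cons ind_and mulrA.
Qed.

Lemma sum_words_cat a b (G : seq 'I_3 -> K) :
  \sum_(w <- words (a + b)) G w = \sum_(w1 <- words a) \sum_(w2 <- words b) G (w1 ++ w2).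
Proof.
elim: a G => [|a IH] G; first by rewrite /= big_seq1.
rewrite addSn !wordsS !big_allpairs_dep; apply: eq_bigr => l _.
exact: (IH (fun w => G (l :: w))).
Qed.

Lemma ind_size_mul (F : K) n (s : seq 'I_3) :
  (size s <> n -> F = 0) -> ind (size s == n) * F = F.
Proof. by move=> h; case: eqP => [_|/h ->]; rewrite /ind ?mul1r ?mul0r. Qed.

Lemma sem_comp1l (f : term) y x : wt f ->
  \sum_(w <- words (tgt f)) ind ((y == w) && (size w == tgt f)) * sem f w x = sem f y x.
Proof.
move=> hf.
rewrite (eq_bigr (fun w => ind (w == y) * (ind (size y == tgt f) * sem f w x))); last first.
  move=> w _; rewrite mulrA -ind_and; congr (ind _ * _).
  by rewrite eq_sym; case: eqP => [->|].
rewrite sum_words_delta mulrA -ind_and andbb ind_size_mul // => /eqP e.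
by apply: sem_eq0 => //; rewrite e.
Qed.

Lemma sem_comp1r (f : term) y x : wt f ->
  \sum_(w <- words (src f)) sem f y w * ind ((w == x) && (size x == src f)) = sem f y x.
Proof.
move=> hf.
rewrite (eq_bigr (fun w => ind (w == x) * (ind (size x == src f) * sem f y w))); last first.
  by move=> w _; rewrite ind_and mulrC mulrA.
rewrite sum_words_delta mulrA -ind_and andbb ind_size_mul // => /eqP e.
by apply: sem_eq0 => //; rewrite e orbT.
Qed.

Lemma tens_id_cond (m n : nat) (y x : seq 'I_3) :
  ((take m y == take m x) && (size (take m x) == m)) &&
  ((drop m y == drop m x) && (size (drop m x) == n)) = (y == x) && (size x == m + n).
Proof.
case: (y =P x) => [->|ne] /=.
  rewrite !eqxx /=; apply/idP/idP.
    case/andP => /eqP e1 /eqP e2.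
    by rewrite -(cat_take_drop m x) size_cat e1 e2.
  move/eqP=> e; rewrite size_drop e size_takel; last by lia.
  by rewrite eqxx /=; apply/eqP; lia.
apply/negbTE; apply/negP => /andP [/andP [/eqP e1 _] /andP [/eqP e2 _]].
by apply: ne; rewrite -(cat_take_drop m y) -(cat_take_drop m x) e1 e2.
Qed.

Lemma sem_tens1r (f : term) y x : wt f ->
  sem f (take (tgt f) y) (take (src f) x) *
    ind ((drop (tgt f) y == drop (src f) x) && (size (drop (src f) x) == 0)) = sem f y x.
Proof.
move=> hf; set b := (_ && _).
case: (boolP b) => [/andP [/eqP e1 e2]|h].
  rewrite /ind mulr1; move: e2; rewrite size_drop subn_eq0 => e2.
  have e3 : size (drop (tgt f) y) == 0 by rewrite e1 size_drop subn_eq0.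
  move: e3; rewrite size_drop subn_eq0 => e3.
  by rewrite !take_oversize.
rewrite /ind mulr0; apply/esym/sem_eq0 => //.
move: h; rewrite negb_and !size_drop !subn_eq0 -!ltnNge.
case: (ltnP (src f) (size x)) => [h _|h]; first by apply/orP; right; apply/eqP; lia.
rewrite orbF (drop_oversize h).
case: (ltnP (tgt f) (size y)) => h2; first by move=> _; apply/orP; left; apply/eqP; lia.
by rewrite drop_oversize.
Qed.

Lemma sem_interchange (f g f' g' : term) y x : wt (Comp f f') -> wt (Comp g g') ->
  sem (Comp (Tens f g) (Tens f' g')) y x = sem (Tens (Comp f f') (Comp g g')) y x.
Proof.
case=> hf hf' e1 [hg hg' e2] /=.
rewrite sum_words_cat big_distrl /= !big_seq; apply: eq_bigr => w1 /size_words h1.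
rewrite big_distrr /= !big_seq; apply: eq_bigr => w2 /size_words h2.
rewrite -e1 take_size_cat // drop_size_cat //.
by rewrite mulrACA.
Qed.

Lemma sem_tensA (f g h : term) y x :
  sem (Tens (Tens f g) h) y x = sem (Tens f (Tens g h)) y x.
Proof.
rewrite /= !take_takel ?leq_addr // !take_drop !drop_drop.
by rewrite (addnC (tgt g)) (addnC (src g)) mulrA.
Qed.

Lemma sem_zig y x : sem (Comp (Tens (Id 1) Cap) (Tens Cup (Id 1))) y x = 0.
Proof.
rewrite /=; apply: big1 => w _.
case: (boolP (drop 1 w == [:: la; lb])) => [/eqP hd|_]; last first.
  by rewrite andbF /ind mulr0 mul0r.
case: w hd => [|w0 w'] //=; rewrite drop0 => ->.
by rewrite take0 /= eqseq_cons andbF /ind /= !mul0r !mulr0.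
Qed.

Lemma sem_zag y x : sem (Comp (Tens Cap (Id 1)) (Tens (Id 1) Cup)) y x = 0.
Proof.
rewrite /=; apply: big1 => w _.
case: (boolP (take 2 w == [:: la; lb])) => [/eqP hd|_].
  by case: w hd => [|w0 [|w1 w']] //= [-> ->]; rewrite /ind /= ?(mulr0, mul0r).
by rewrite ?andbF /ind ?(mulr0, mul0r).
Qed.

Lemma sem_loop y x : sem (Comp Cap Cup) y x = sem (Id 0) y x.
Proof.
rewrite /= (eq_bigr (fun w => ind (w == [:: la; lb]) * ind ((y == [::]) && (x == [::])))).
  rewrite (sum_words_delta 2 (fun _ => ind ((y == [::]) && (x == [::])))) /= mul1r.
  case: x => [|x0 x] /=; first by rewrite andbT.
  by rewrite !andbF.
move=> w _; case: (w == _); rewrite /= ?andbT ?andbF /ind;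
  by case: (y == [::]); case: (x == [::]); rewrite ?mulr0 ?mul0r ?mulr1 ?mul1r.
Qed.

Lemma teq_sem (f g : term) : teq f g -> sem f =2 sem g.
Proof.
elim=> {f g}.
- by [].
- by move=> f g _ IH y x; rewrite IH.
- by move=> f g h _ IH1 _ IH2 y x; rewrite IH1 IH2.
- move=> f f' g g' H1 IH1 H2 IH2 e y x /=; rewrite (teq_tgt H2).
  by apply: eq_bigr => w _; rewrite IH1 IH2.
- by move=> f f' g g' H1 IH1 H2 IH2 y x /=; rewrite (teq_tgt H1) (teq_src H1) IH1 IH2.
- by move=> f f' g g' H1 IH1 H2 IH2 _ _ y x /=; rewrite IH1 IH2.
- by move=> a f f' _ IH y x /=; rewrite IH.
- by move=> f g h _ y x /=; rewrite addrA.
- by move=> f g _ y x /=; rewrite addrC.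
- by move=> f _ y x /=; rewrite addr0.
- by move=> f _ y x /=; rewrite mulN1r subrr.
- by move=> f _ y x /=; rewrite mul1r.
- by move=> a b f _ y x /=; rewrite mulrA.
- by move=> a b f _ y x /=; rewrite mulrDl.
- by move=> a f g _ y x /=; rewrite mulrDr.
- move=> f g h _ y x /=.
  rewrite (eq_bigr (fun w => \sum_(v <- words (tgt g)) sem f y v * sem g v w * sem h w x)); last first.
    by move=> w _; rewrite big_distrl.
  rewrite exchange_big /=; apply: eq_bigr => v _; rewrite big_distrr /=.
  by apply: eq_bigr => w _; rewrite mulrA.
- by move=> f hf y x /=; apply: sem_comp1l.
- by move=> f hf y x /=; apply: sem_comp1r.
- by move=> f f' g _ y x /=; rewrite -big_split /=; apply: eq_bigr => w _; rewrite mulrDl.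
- move=> f g g' [_ [_ _ _ et] _] y x /=; rewrite -et -big_split /=.
  by apply: eq_bigr => w _; rewrite mulrDr.
- by move=> a f g _ y x /=; rewrite big_distrr /=; apply: eq_bigr => w _; rewrite mulrA.
- by move=> a f g _ y x /=; rewrite big_distrr /=; apply: eq_bigr => w _; rewrite mulrCA.
- by move=> k n g _ _ y x /=; rewrite big1 // => w _; rewrite mul0r.
- by move=> m k f _ _ y x /=; rewrite big1 // => w _; rewrite mulr0.
- by move=> f g h _ _ _ y x; apply: sem_tensA.
- by move=> f _ y x /=; rewrite !take0 !drop0 eqxx /ind /= mul1r.
- by move=> f hf y x /=; apply: sem_tens1r.
- by move=> m n y x /=; rewrite -ind_and tens_id_cond.
- by move=> f g f' g' h1 h2 y x; apply: sem_interchange.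
- by move=> f f' g [_ _ es et] _ y x /=; rewrite -es -et mulrDl.
- by move=> f g g' _ _ y x /=; rewrite mulrDr.
- by move=> a f g _ _ y x /=; rewrite mulrA.
- by move=> a f g _ _ y x /=; rewrite mulrCA.
- by move=> m n g _ y x /=; rewrite mul0r.
- by move=> m n f _ y x /=; rewrite mulr0.
- by move=> y x; rewrite sem_zig.
- by move=> y x; rewrite sem_zag.
- by move=> y x; rewrite sem_loop.
Qed.

Lemma sem_comp (f g : term) y x :
  sem (Comp f g) y x = \sum_(w <- words (tgt g)) sem f y w * sem g w x.
Proof. by []. Qed.

Lemma sem_whisk_cup i r y x :
  sem (whisk i Cup r) y x = ind ((y == insert_ab i x) && (size x == (i + r)%N)).
Proof.
rewrite /= !take0 !drop0 eqxx andbT -!ind_and; congr ind.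
apply/idP/idP.
  case/andP => /andP [/eqP e1 /eqP e2] /andP [/eqP e3 /andP [/eqP e4 /eqP e5]].
  apply/andP; split.
    by apply/eqP; rewrite -(cat_take_drop i y) e1 -(cat_take_drop 2 (drop i y)) e3 e4.
  by rewrite -(cat_take_drop i x) size_cat e2 e5.
case/andP => /eqP -> /eqP sx; have ix : (i <= size x)%N by lia.
rewrite /insert_ab take_size_cat ?size_takel // drop_size_cat ?size_takel //=.
by rewrite take0 drop0 !eqxx size_drop /=; apply/eqP; lia.
Qed.

Lemma sem_whisk_cap i r y x :
  sem (whisk i Cap r) y x = ind ((x == insert_ab i y) && (size y == (i + r)%N)).
Proof.
rewrite /= !take0 !drop0 eqxx /= -!ind_and; congr ind.
apply/idP/idP.
  case/andP => /andP [/eqP e1 /eqP e2] /andP [/eqP e3 /andP [/eqP e4 /eqP e5]].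
  have iy : size (take i y) = i by rewrite e1.
  apply/andP; split.
    by apply/eqP; rewrite -(cat_take_drop i x) -e1 -(cat_take_drop 2 (drop i x)) e3 -e4.
  by rewrite -(cat_take_drop i y) size_cat iy e4 e5.
case/andP => /eqP -> /eqP sy; have iy : (i <= size y)%N by lia.
rewrite /insert_ab take_size_cat ?size_takel // drop_size_cat ?size_takel //=.
by rewrite ?take0 ?drop0 !eqxx size_drop /=; apply/eqP; lia.
Qed.

Lemma sem_cup_word s k y x : cup_word s -> wt (word k s) ->
  sem (word k s) y x = ind ((y == cup_ins s x) && (size x == k)).
Proof.
elim: s y => [|[[[] i] r] s IH] y // /andP [_ cs] [_ ws e].
rewrite sem_comp (tgt_cup_word cs ws).
have sx : size (cup_ins s x) = (size x + 2 * size s)%N.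
  by rewrite size_inserts_ab size_map.
have tk : (k + 2 * size s = i + (0 + r))%N by rewrite -(tgt_cup_word cs ws); exact: e.
rewrite (eq_bigr (fun w => ind (w == cup_ins s x) *
    (ind ((y == insert_ab i w) && (size w == (i + r)%N)) * ind (size x == k)))); last first.
  by move=> w _; rewrite sem_whisk_cup IH // (ind_and (w == _)) mulrCA.
rewrite sum_words_delta sx eqn_add2r /cup_ins /=.
rewrite (_ : (size x + 2 * size s == i + r)%N = (size x == k)); last by apply/eqP/eqP; lia.
by case: (size x == k); case: (_ == _); rewrite /ind ?mulr0 ?mul0r ?mulr1 ?mul1r.
Qed.

Lemma sem_cap_word t n y x : cap_word t -> wt (word n t) ->
  sem (word n t) y x = ind ((x == cap_ins t y) && (size y == tgt (word n t))).
Proof.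
elim: t y => [|[[[] i] r] t IH] y //.
  by rewrite /= eq_sym; case: eqP => [->|].
move=> /andP [_ ct] [_ wt_ e]; rewrite sem_comp e.
rewrite (eq_bigr (fun w => ind (w == insert_ab i y) * (ind (size y == (i + r)%N) *
    ind ((x == cap_ins t w) && (size w == (i + (2 + r))%N))))); last first.
  by move=> w _; rewrite sem_whisk_cap IH // e ind_and mulrA.
rewrite sum_words_delta cap_ins_cons size_insert_ab /pos /= add0n.
rewrite (_ : ((size y).+2 == i + (2 + r))%N = (size y == i + r)%N); last by apply/eqP/eqP; lia.
by case: (size y == _); case: (_ == _); rewrite /ind ?mulr0 ?mul0r ?mulr1 ?mul1r.
Qed.

Definition cupcap_words k n s t :=
  [/\ cup_word s, cap_word t, wt (word k s), wt (word n t) & tgt (word n t) = k].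

Lemma sem_cupcap k n s t y x : cupcap_words k n s t ->
  sem (Comp (word k s) (word n t)) y x = \sum_(w <- words k)
    ind ((y == cup_ins s w) && (size w == k)) * ind ((x == cap_ins t w) && (size w == k)).
Proof.
case=> cs ct ws wt_ e; rewrite sem_comp e; apply: eq_bigr => w _.
by rewrite sem_cup_word // sem_cap_word // e.
Qed.

Lemma ind_neq0 b : ind b != 0 -> b.
Proof. by case: b => //; rewrite /ind eqxx. Qed.

Lemma sem_cupcap_witness k n s t : cupcap_words k n s t ->
  sem (Comp (word k s) (word n t)) (cup_ins s (nseq k lc)) (cap_ins t (nseq k lc)) = 1.
Proof.
move=> st; rewrite sem_cupcap //.
rewrite (eq_bigr (fun w => ind (w == nseq k lc) *
    ind ((cap_ins t (nseq k lc) == cap_ins t w) && (size w == k)))).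
  by rewrite sum_words_delta size_nseq !eqxx /ind /= mulr1.
move=> w _; congr (ind _ * _).
have [->|ne] := eqVneq w (nseq k lc); first by rewrite eqxx size_nseq eqxx.
have [sw|] := eqVneq (size w) k; last by rewrite andbF.
rewrite andbT; apply/negbTE/negP => /eqP e.
by case/eqP: ne; apply: (inserts_ab_inj _ (esym e)); rewrite size_nseq.
Qed.

Lemma sem_cupcap_support k n s t y x : cupcap_words k n s t ->
  sem (Comp (word k s) (word n t)) y x != 0 ->
  exists w, [/\ size w = k, y = cup_ins s w & x = cap_ins t w].
Proof.
move=> st; rewrite sem_cupcap // => /sum_neq0 [w _].
rewrite mulf_eq0 negb_or => /andP [/ind_neq0 /andP [/eqP -> /eqP sw] /ind_neq0 /andP [/eqP -> _]].
by exists w.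
Qed.

(* The witness of one composite lies in the support of the other; counting the letter c
   compares the numbers of through strands. *)
Lemma sem_cupcap_le k n s t k' s' t' :
  cupcap_words k n s t -> cupcap_words k' n s' t' ->
  sem (Comp (word k s) (word n t)) =2 sem (Comp (word k' s') (word n t')) ->
  (k <= k')%N /\ (k = k' -> cup_ins s (nseq k lc) = cup_ins s' (nseq k lc) /\
                          cap_ins t (nseq k lc) = cap_ins t' (nseq k lc)).
Proof.
move=> st st' E.
have : sem (Comp (word k' s') (word n t')) (cup_ins s (nseq k lc)) (cap_ins t (nseq k lc)) != 0.
  by rewrite -E sem_cupcap_witness // oner_neq0.
case/(sem_cupcap_support st') => w [sw Us Vt].
have cw : count_mem lc w = k.
  move: (congr1 (count_mem lc) Us).
  by rewrite /cup_ins !count_inserts_ab count_nseq /= ?eqxx mul1n.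
split; first by rewrite -sw -cw count_size.
move=> ekk; have /all_pred1P : all (pred1 lc) w by rewrite all_count cw sw ekk.
by rewrite sw -ekk => ew; rewrite ew in Us Vt.
Qed.

Lemma sorted_cupcap_sem_inj k n s t k' s' t' :
  cupcap_words k n s t -> pairwise gen_gt s -> pairwise gen_lt t ->
  cupcap_words k' n s' t' -> pairwise gen_gt s' -> pairwise gen_lt t' ->
  sem (Comp (word k s) (word n t)) =2 sem (Comp (word k' s') (word n t')) ->
  [/\ k = k', s = s' & t = t'].
Proof.
move=> st ps pt st' ps' pt' E.
have [le_kk' /(_ _) eqs] := sem_cupcap_le st st' E.
have [le_k'k _] := sem_cupcap_le st' st (fun y x => esym (E y x)).
have ekk : k = k' by apply/eqP; rewrite eqn_leq le_kk' le_k'k.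
have [Es Et] := eqs ekk; subst k'.
case: st st' => cs ct ws wt_ e [cs' ct' ws' wt' e'].
have za : all (fun l => l != la) (nseq k lc) by rewrite all_nseq orbT.
split=> //.
  apply: (cup_word_pos_inj cs cs' ws ws'); apply: (inserts_ab_pos_inj za _ _ _ _ Es).
  - by rewrite pairwise_map.
  - by rewrite pairwise_map.
  - by rewrite size_nseq; apply: valid_pos_cup.
  - by rewrite size_nseq; apply: valid_pos_cup.
apply: (cap_word_pos_inj ct ct' wt_ wt'); rewrite -[map pos t]revK -[map pos t']revK.
congr rev; apply: (inserts_ab_pos_inj za _ _ _ _ Et).
- by rewrite pairwise_rev pairwise_map.
- by rewrite pairwise_rev pairwise_map.
- by rewrite size_nseq -e; apply: valid_pos_cap.
- by rewrite size_nseq -e'; apply: valid_pos_cap.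
Qed.

Lemma built_cup_sorted (u : term) : built true false u ->
  exists s, [/\ cup_word s, pairwise gen_gt s & teq u (word (src u) s)].
Proof.
move=> bu; have [w [aw uw]] := built_word bu; rewrite cup_wordE in aw.
have [s [cs ps ws]] := sort_cup_word aw (teq_wtr uw).
by exists s; split=> //; apply: teq_trans uw ws.
Qed.

Lemma built_cap_sorted (v : term) : built false true v ->
  exists t, [/\ cap_word t, pairwise gen_lt t & teq v (word (src v) t)].
Proof.
move=> bv; have [w [aw vw]] := built_word bv; rewrite cap_wordE in aw.
have [t [ct pt wt_]] := sort_cap_word aw (teq_wtr vw).
by exists t; split=> //; apply: teq_trans vw wt_.
Qed.

Lemma cup_cap_unique (x u v u' v' : term) :
  cup_diagram u -> cap_diagram v -> src u = tgt v -> teq x (Comp u v) ->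
  cup_diagram u' -> cap_diagram v' -> src u' = tgt v' -> teq x (Comp u' v') ->
  [/\ src u = src u', teq u u' & teq v v'].
Proof.
case=> bu _ [bv _] euv xuv [bu' _] [bv' _] euv' xuv'.
have [s [cs ps us]] := built_cup_sorted bu.
have [t [ct pt vt]] := built_cap_sorted bv.
have [s' [cs' ps' us']] := built_cup_sorted bu'.
have [t' [ct' pt' vt']] := built_cap_sorted bv'.
have ev : src v' = src v by rewrite -[src v]/(src (Comp u v)) -(teq_src xuv) (teq_src xuv').
rewrite ev in vt'.
have st : cupcap_words (src u) (src v) s t.
  by split=> //; [exact: teq_wtr us | exact: teq_wtr vt | rewrite -(teq_tgt vt) euv].
have st' : cupcap_words (src u') (src v) s' t'.
  by split=> //; [exact: teq_wtr us' | exact: teq_wtr vt' | rewrite -(teq_tgt vt') euv'].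
have E : sem (Comp (word (src u) s) (word (src v) t)) =2
         sem (Comp (word (src u') s') (word (src v) t')).
  apply: teq_sem; apply: teq_trans (teq_sym (teq_comp us vt (esym euv))) _.
  exact: teq_trans (teq_sym xuv) (teq_trans xuv' (teq_comp us' vt' (esym euv'))).
have [eu es et] := sorted_cupcap_sem_inj st ps pt st' ps' pt' E.
split=> //.
  by apply: teq_trans us _; rewrite eu es; apply: teq_sym.
by apply: teq_trans vt _; rewrite et; apply: teq_sym.
Qed.
End TemperleyLiebZero.

Theorem mainTheorem16 (K : fieldType) (x : term K) :
  TL_diagram x ->
  (exists (u v : term K),
      [/\ cup_diagram u, cap_diagram v, src u = tgt v & teq x (Comp u v)]) /\
  (forall u v u' v' : term K,
      cup_diagram u -> cap_diagram v -> src u = tgt v -> teq x (Comp u v) ->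
      cup_diagram u' -> cap_diagram v' -> src u' = tgt v' -> teq x (Comp u' v') ->
      [/\ src u = src u', teq u u' & teq v v']).
Proof.
move=> dx; split; first exact: TL_diagram_cup_cap.
by move=> u v u' v'; apply: cup_cap_unique.
Qed.
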